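(* Let $\gamma:I\to\mathbb{R}^2$ be a $C^\infty$ curve with $0\in I$. Then $\gamma'(0)=\gamma''(0)=\gamma'''(0)=\mathbf{0}$, $A\neq0$ and $-77B^2+105AD+60AC=0$ hold if and only if $\gamma$ is $\mathcal{A}$-equivalent at $s=0$ to $\gamma_1(s)=(s^4,s^5)+h(s)$ for some $\mathbb{R}^2$-valued $C^\infty$ function $h$ with $h(0)=h'(0)=\cdots=h^{(7)}(0)=\mathbf{0}$.
   Context: $A=\det(\gamma^{(5)}(0),\gamma^{(4)}(0))$, $B=\det(\gamma^{(6)}(0),\gamma^{(4)}(0))$, $C=\det(\gamma^{(7)}(0),\gamma^{(4)}(0))$, $D=\det(\gamma^{(6)}(0),\gamma^{(5)}(0))$. $\mathcal{A}$-equivalence: equivalence via $C^\infty$ diffeomorphism germs of source and target. *)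

From Stdlib Require Import Reals List.
From Coquelicot Require Import Coquelicot.
Open Scope R_scope.

Definition smooth1_near (f : R -> R) (c e : R) : Prop :=
  forall (n : nat) (x : R), Rabs (x - c) < e -> ex_derive (Derive_n f n) x.

Definition smooth1_on_interval (f : R -> R) (a b : R) : Prop :=
  forall (n : nat) (x : R), a < x < b -> ex_derive (Derive_n f n) x.

Definition curve_smooth_near (g : R -> R * R) (c e : R) : Prop :=
  smooth1_near (fun t => fst (g t)) c e /\ smooth1_near (fun t => snd (g t)) c e.

(* Partial derivatives of f : R^2 -> R; true = first variable. *)
Definition partial (b : bool) (f : R * R -> R) : R * R -> R :=
  fun p => if b then Derive (fun t => f (t, snd p)) (fst p)
           else Derive (fun t => f (fst p, t)) (snd p).

Definition ex_partial (b : bool) (f : R * R -> R) (p : R * R) : Prop :=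
  if b then ex_derive (fun t => f (t, snd p)) (fst p)
  else ex_derive (fun t => f (fst p, t)) (snd p).

Definition iter_partial (ds : list bool) (f : R * R -> R) : R * R -> R :=
  fold_right partial f ds.

Definition in_square (q : R * R) (e : R) (p : R * R) : Prop :=
  Rabs (fst p - fst q) < e /\ Rabs (snd p - snd q) < e.

Definition smooth2_near (f : R * R -> R) (q : R * R) (e : R) : Prop :=
  forall (ds : list bool) (p : R * R), in_square q e p ->
    (forall b : bool, ex_partial b (iter_partial ds f) p) /\
    continuous (iter_partial ds f) p.

Definition map2_smooth_near (F : R * R -> R * R) (q : R * R) (e : R) : Prop :=
  smooth2_near (fun p => fst (F p)) q e /\ smooth2_near (fun p => snd (F p)) q e.

Definition diffeo1_germ (phi : R -> R) (x0 : R) : Prop :=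
  exists (e : R) (chi : R -> R), 0 < e /\
    smooth1_near phi x0 e /\ smooth1_near chi (phi x0) e /\
    (forall x, Rabs (x - x0) < e -> chi (phi x) = x) /\
    (forall y, Rabs (y - phi x0) < e -> phi (chi y) = y).

Definition diffeo2_germ (psi : R * R -> R * R) (q : R * R) : Prop :=
  exists (e : R) (chi : R * R -> R * R), 0 < e /\
    map2_smooth_near psi q e /\ map2_smooth_near chi (psi q) e /\
    (forall p, in_square q e p -> chi (psi p) = p) /\
    (forall p, in_square (psi q) e p -> psi (chi p) = p).

Definition A_equivalent_at0 (g d : R -> R * R) : Prop :=
  exists (phi : R -> R) (psi : R * R -> R * R) (e : R),
    phi 0 = 0 /\ psi (g 0) = d 0 /\
    diffeo1_germ phi 0 /\ diffeo2_germ psi (g 0) /\ 0 < e /\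
    (forall s, Rabs s < e -> psi (g s) = d (phi s)).

Definition dn (g : R -> R * R) (k : nat) (t : R) : R * R :=
  (Derive_n (fun s => fst (g s)) k t, Derive_n (fun s => snd (g s)) k t).

Definition det2 (u v : R * R) : R := fst u * snd v - snd u * fst v.

Definition coefA (g : R -> R * R) : R := det2 (dn g 5 0) (dn g 4 0).
Definition coefB (g : R -> R * R) : R := det2 (dn g 6 0) (dn g 4 0).
Definition coefC (g : R -> R * R) : R := det2 (dn g 7 0) (dn g 4 0).
Definition coefD (g : R -> R * R) : R := det2 (dn g 6 0) (dn g 5 0).

From Stdlib Require Import Reals List Lra Lia Psatz FunctionalExtensionality ClassicalEpsilon Factorial.
From Coquelicot Require Import Coquelicot.
Open Scope R_scope. Import ListNotations.

(** Both directions compare 7-jets at [0]. If [psi o gamma = (s^4 + h1, s^5 + h2) o phi], the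
    right-hand side has the 7-jet of [(phi^4, phi^5)]. When [gamma] vanishes to order [m] at [0],
    the derivatives of [psi o gamma] of order below [2 m] only see [Dpsi]; for [m = 1, 2, 3] this
    forces [gamma', gamma'', gamma'''] to vanish, and for [m = 4] it makes [gamma^(4..7)(0)] the
    image under [Dpsi^-1] of the jets of [(phi^4, phi^5)], whose determinants satisfy [A <> 0]
    and the quadric. Conversely, when the quadric holds one solves for a linear [Dpsi] and a
    polynomial [phi s = s + q s^2 + r s^3 + u s^4] such that
    [h := psi o gamma o phi^-1 - (t^4, t^5)] has vanishing 7-jet. *)

(** * Functions differentiable [n] times near a point *)

Definition Cn (n : nat) (f : R -> R) (x : R) : Prop :=
  locally x (fun y => forall k, (k < n)%nat -> ex_derive (Derive_n f k) y).

Definition Cinf (f : R -> R) (x : R) : Prop := forall n, Cn n f x.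

Lemma Derive_n_Derive f k : Derive_n (Derive f) k = Derive_n f (S k).
Proof.
  apply functional_extensionality; intro x.
  change (Derive f) with (Derive_n f 1). rewrite Derive_n_comp.
  now replace (k + 1)%nat with (S k) by lia.
Qed.

Lemma Cn_S n f x : Cn (S n) f x <-> locally x (ex_derive f) /\ Cn n (Derive f) x.
Proof.
  unfold Cn; split.
  - intro H; split; apply filter_imp with (2 := H).
    + intros y Hy. apply (Hy 0%nat). lia.
    + intros y Hy k Hk. rewrite Derive_n_Derive. apply Hy. lia.
  - intros [H1 H2]. generalize (filter_and _ _ H1 H2). apply filter_imp.
    intros y [Hy1 Hy2] [|k] Hk; [exact Hy1|].
    rewrite <- Derive_n_Derive. apply Hy2. lia.
Qed.

Lemma Cn_le m n f x : (m <= n)%nat -> Cn n f x -> Cn m f x.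
Proof. intros Hmn H. apply filter_imp with (2 := H). intros y Hy k Hk. apply Hy. lia. Qed.

Lemma Cn_0 f x : Cn 0 f x.
Proof. unfold Cn. apply filter_forall. intros y k Hk. lia. Qed.

Lemma Cn_ext_loc n f g x : locally x (fun y => f y = g y) -> Cn n f x -> Cn n g x.
Proof.
  intros He H. unfold Cn in *. apply locally_locally in He.
  generalize (filter_and _ _ He H). apply filter_imp.
  intros y [Hy1 Hy2] k Hk. apply locally_locally in Hy1.
  apply ex_derive_ext_loc with (Derive_n f k).
  - apply filter_imp with (2 := Hy1). intros z Hz. now apply Derive_n_ext_loc.
  - now apply Hy2.
Qed.

Lemma Cn_ex_derive_n n f x : Cn n f x ->
  locally x (fun y => forall k, (k <= n)%nat -> ex_derive_n f k y).
Proof.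
  intro H. apply filter_imp with (2 := H). intros y Hy [|k] Hk; [exact I|].
  apply Hy. lia.
Qed.

Lemma Cn_ex_derive n f x : (0 < n)%nat -> Cn n f x -> ex_derive f x.
Proof. intros Hn H. apply locally_singleton in H. exact (H 0%nat Hn). Qed.

Lemma ex_derive_of_Cinf f x : Cinf f x -> ex_derive f x.
Proof. intro H. exact (Cn_ex_derive 1 f x Nat.lt_0_1 (H 1%nat)). Qed.

Lemma Cn_continuity_pt n f x : (0 < n)%nat -> Cn n f x -> continuity_pt f x.
Proof.
  intros Hn H. destruct (Cn_ex_derive n f x Hn H) as [l Hl].
  apply derivable_continuous_pt, ex_derive_Reals_0. now exists l.
Qed.

Lemma Cn_const n c x : Cn n (fun _ => c) x.
Proof.
  revert c x; induction n; intros c x; [apply Cn_0|].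
  apply Cn_S; split; [apply filter_forall; intros; apply ex_derive_const|].
  apply Cn_ext_loc with (fun _ => 0); [|apply IHn].
  apply filter_forall. intros y. now rewrite Derive_const.
Qed.

Lemma Cn_id n x : Cn n (fun y => y) x.
Proof.
  destruct n; [apply Cn_0|].
  apply Cn_S; split; [apply filter_forall; intros; apply (@ex_derive_id R_AbsRing)|].
  apply Cn_ext_loc with (fun _ => 1); [|apply Cn_const].
  apply filter_forall. intros y. change (1 = Derive id y). now rewrite Derive_id.
Qed.

Lemma Cn_plus n f g x : Cn n f x -> Cn n g x -> Cn n (fun y => f y + g y) x.
Proof.
  revert f g x; induction n; intros f g x Hf Hg; [apply Cn_0|].
  apply Cn_S in Hf as [Hf1 Hf2]; apply Cn_S in Hg as [Hg1 Hg2].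
  apply Cn_S; split.
  - generalize (filter_and _ _ Hf1 Hg1). apply filter_imp. intros y [a b].
    exact (@ex_derive_plus R_AbsRing R_NormedModule f g y a b).
  - apply Cn_ext_loc with (fun y => Derive f y + Derive g y); [|now apply IHn].
    generalize (filter_and _ _ Hf1 Hg1). apply filter_imp. intros y [a b].
    now rewrite Derive_plus.
Qed.

Lemma Cn_scal n c f x : Cn n f x -> Cn n (fun y => c * f y) x.
Proof.
  revert f x; induction n; intros f x Hf; [apply Cn_0|].
  apply Cn_S in Hf as [Hf1 Hf2].
  apply Cn_S; split.
  - apply filter_imp with (2 := Hf1). intros y a. now apply ex_derive_scal.
  - apply Cn_ext_loc with (fun y => c * Derive f y); [|now apply IHn].
    apply filter_imp with (2 := Hf1). intros y a. now rewrite Derive_scal.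
Qed.

Lemma Cn_minus n f g x : Cn n f x -> Cn n g x -> Cn n (fun y => f y - g y) x.
Proof.
  intros Hf Hg. apply Cn_ext_loc with (fun y => f y + (-1) * g y).
  - apply filter_forall; intro; ring.
  - now apply Cn_plus, Cn_scal.
Qed.

Lemma Cn_mult n f g x : Cn n f x -> Cn n g x -> Cn n (fun y => f y * g y) x.
Proof.
  revert f g x; induction n; intros f g x Hf Hg; [apply Cn_0|].
  assert (Hf' := Cn_le n _ _ _ (Nat.le_succ_diag_r n) Hf).
  assert (Hg' := Cn_le n _ _ _ (Nat.le_succ_diag_r n) Hg).
  apply Cn_S in Hf as [Hf1 Hf2]; apply Cn_S in Hg as [Hg1 Hg2].
  apply Cn_S; split.
  - generalize (filter_and _ _ Hf1 Hg1). apply filter_imp. intros y [a b].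
    now apply ex_derive_mult.
  - apply Cn_ext_loc with (fun y => Derive f y * g y + f y * Derive g y).
    + generalize (filter_and _ _ Hf1 Hg1). apply filter_imp. intros y [a b].
      now rewrite Derive_mult.
    + apply Cn_plus; now apply IHn.
Qed.

Lemma Cn_pow n m f x : Cn n f x -> Cn n (fun y => f y ^ m) x.
Proof.
  intro H. induction m as [|m IH]; [apply (Cn_const n 1)|].
  apply (Cn_mult n f (fun y => f y ^ m)); assumption.
Qed.

Lemma Cn_comp n f g x : Cn n f (g x) -> Cn n g x -> Cn n (fun y => f (g y)) x.
Proof.
  revert f g x; induction n; intros f g x Hf Hg; [apply Cn_0|].
  assert (Hc := Cn_continuity_pt _ _ _ (Nat.lt_0_succ n) Hg).
  assert (Hg' := Cn_le n _ _ _ (Nat.le_succ_diag_r n) Hg).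
  apply Cn_S in Hf as [Hf1 Hf2]; apply Cn_S in Hg as [Hg1 Hg2].
  assert (Hf1' : locally x (fun y => ex_derive f (g y))) by now apply locally_pt_comp.
  apply Cn_S; split.
  - generalize (filter_and _ _ Hf1' Hg1). apply filter_imp. intros y [a b].
    exact (@ex_derive_comp R_AbsRing R_NormedModule f g y a b).
  - apply Cn_ext_loc with (fun y => Derive f (g y) * Derive g y).
    + generalize (filter_and _ _ Hf1' Hg1). apply filter_imp. intros y [a b].
      rewrite (Derive_comp f g y a b). apply Rmult_comm.
    + apply Cn_mult; auto.
Qed.

Lemma Cn_inv n x : x <> 0 -> Cn n Rinv x.
Proof.
  revert x; induction n; intros x Hx; [apply Cn_0|].
  assert (Hl : locally x (fun y => y <> 0)) by (apply locally_open with (D := fun y => y <> 0); auto; apply open_neq).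
  apply Cn_S; split.
  - apply filter_imp with (2 := Hl). intros y Hy.
    apply (ex_derive_inv (fun y => y)); auto. apply (@ex_derive_id R_AbsRing).
  - apply Cn_ext_loc with (fun y => (-1) * (Rinv y * Rinv y)).
    + apply filter_imp with (2 := Hl). intros y Hy.
      change ((-1) * (/ y * / y) = Derive (fun y => / (fun z => z) y) y).
      rewrite Derive_inv; auto; [|apply (@ex_derive_id R_AbsRing)].
      change (Derive (fun z => z) y) with (Derive id y). rewrite Derive_id. now field.
    + apply Cn_scal, Cn_mult; now apply IHn.
Qed.

Lemma locally_Rabs_lt c e x : Rabs (x - c) < e -> locally x (fun y => Rabs (y - c) < e).
Proof.
  intro H. apply (locally_interval _ _ (c - e) (c + e)); simpl; try (apply Rabs_def2 in H; lra).
  intros y Ha Hb. apply Rabs_def1; simpl in *; lra.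
Qed.

Lemma locally_Rabs_lt_0 e x : Rabs x < e -> locally x (fun y => Rabs y < e).
Proof.
  intro H. apply filter_imp with (2 := locally_Rabs_lt 0 e x ltac:(now rewrite Rminus_0_r)).
  intro y. now rewrite Rminus_0_r.
Qed.

Lemma locally_ex_Rabs_lt (P : R -> Prop) x : locally x P ->
  exists e, 0 < e /\ forall y, Rabs (y - x) < e -> P y.
Proof. intros [eps H]. exists eps. split; [apply cond_pos|]. intros y Hy. now apply H. Qed.

Lemma ex_derive_Derive_n_of_Cinf n f x : Cinf f x -> ex_derive (Derive_n f n) x.
Proof. intro H. exact (locally_singleton _ _ (H (S n)) n (Nat.lt_succ_diag_r n)). Qed.

Lemma Cinf_of_smooth1_near f c e x : smooth1_near f c e -> Rabs (x - c) < e -> Cinf f x.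
Proof.
  intros H Hx n. apply filter_imp with (2 := locally_Rabs_lt c e x Hx).
  intros y Hy k _. now apply H.
Qed.

Lemma Cinf_of_smooth1_on_interval f a b x : smooth1_on_interval f a b -> a < x < b -> Cinf f x.
Proof.
  intros H Hx n. apply (locally_interval _ _ a b); simpl; try lra.
  intros y Ha Hb k Hk. apply H. simpl in *; lra.
Qed.

Lemma Derive_n_plus_of_Cn n f g x : Cn n f x -> Cn n g x ->
  Derive_n (fun y => f y + g y) n x = Derive_n f n x + Derive_n g n x.
Proof. intros. apply Derive_n_plus; now apply Cn_ex_derive_n. Qed.

Lemma Derive_n_minus_of_Cn n f g x : Cn n f x -> Cn n g x ->
  Derive_n (fun y => f y - g y) n x = Derive_n f n x - Derive_n g n x.
Proof. intros. apply Derive_n_minus; now apply Cn_ex_derive_n. Qed.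

Lemma Derive_n_S_ext_loc k f h x : locally x (fun y => Derive f y = h y) ->
  Derive_n f (S k) x = Derive_n h k x.
Proof. intro H. rewrite <- Derive_n_Derive. now apply Derive_n_ext_loc. Qed.

Lemma Derive_n_S_mult k f g x : Cn (S k) f x -> Cn (S k) g x ->
  Derive_n (fun y => f y * g y) (S k) x =
  Derive_n (fun y => Derive f y * g y) k x + Derive_n (fun y => f y * Derive g y) k x.
Proof.
  intros Hf Hg.
  assert (Hf' := Cn_le k _ _ _ (Nat.le_succ_diag_r k) Hf).
  assert (Hg' := Cn_le k _ _ _ (Nat.le_succ_diag_r k) Hg).
  apply Cn_S in Hf as [Hf1 Hf2]; apply Cn_S in Hg as [Hg1 Hg2].
  rewrite (Derive_n_S_ext_loc k _ (fun y => Derive f y * g y + f y * Derive g y)).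
  - apply Derive_n_plus_of_Cn; now apply Cn_mult.
  - generalize (filter_and _ _ Hf1 Hg1). apply filter_imp. intros y [a b].
    now apply Derive_mult.
Qed.

Lemma Derive_n_S_comp k f g x : Cn (S k) f (g x) -> Cn (S k) g x ->
  Derive_n (fun y => f (g y)) (S k) x = Derive_n (fun y => Derive f (g y) * Derive g y) k x.
Proof.
  intros Hf Hg.
  assert (Hc := Cn_continuity_pt _ _ _ (Nat.lt_0_succ k) Hg).
  apply Cn_S in Hf as [Hf1 _]; apply Cn_S in Hg as [Hg1 _].
  assert (Hf1' : locally x (fun y => ex_derive f (g y))) by now apply locally_pt_comp.
  apply Derive_n_S_ext_loc.
  generalize (filter_and _ _ Hf1' Hg1). apply filter_imp. intros y [a b].
  rewrite (Derive_comp f g y a b). apply Rmult_comm.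
Qed.

(** * Jets *)

Definition jet_eq (n : nat) (f g : R -> R) (x : R) : Prop :=
  forall k, (k <= n)%nat -> Derive_n f k x = Derive_n g k x.

Lemma jet_eq_Derive n f g x : jet_eq (S n) f g x -> jet_eq n (Derive f) (Derive g) x.
Proof. intros H k Hk. rewrite !Derive_n_Derive. apply H. lia. Qed.

Lemma jet_eq_le m n f g x : (m <= n)%nat -> jet_eq n f g x -> jet_eq m f g x.
Proof. intros Hmn H k Hk. apply H. lia. Qed.

Lemma jet_eq_mult n f1 f2 g1 g2 x : Cn n f1 x -> Cn n f2 x -> Cn n g1 x -> Cn n g2 x ->
  jet_eq n f1 g1 x -> jet_eq n f2 g2 x ->
  jet_eq n (fun y => f1 y * f2 y) (fun y => g1 y * g2 y) x.
Proof.
  revert f1 f2 g1 g2; induction n; intros f1 f2 g1 g2 H1 H2 H3 H4 J1 J2 [|k] Hk.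
  - generalize (J1 0%nat Hk) (J2 0%nat Hk); simpl; intros -> ->; reflexivity.
  - lia.
  - generalize (J1 0%nat (Nat.le_0_l _)) (J2 0%nat (Nat.le_0_l _)); simpl; intros -> ->; reflexivity.
  - rewrite !Derive_n_S_mult by (apply (Cn_le _ (S n)); auto; lia).
    assert (Lo : forall f, Cn (S n) f x -> Cn n f x) by (intro; apply Cn_le; lia).
    assert (J1' := jet_eq_le n (S n) _ _ _ (Nat.le_succ_diag_r n) J1).
    assert (J2' := jet_eq_le n (S n) _ _ _ (Nat.le_succ_diag_r n) J2).
    assert (K1 := Lo _ H1); assert (K2 := Lo _ H2); assert (K3 := Lo _ H3); assert (K4 := Lo _ H4).
    apply Cn_S in H1 as [_ H1]; apply Cn_S in H2 as [_ H2];
    apply Cn_S in H3 as [_ H3]; apply Cn_S in H4 as [_ H4].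
    f_equal.
    + apply (IHn (Derive f1) f2 (Derive g1) g2); auto using jet_eq_Derive. lia.
    + apply (IHn f1 (Derive f2) g1 (Derive g2)); auto using jet_eq_Derive. lia.
Qed.

Lemma jet_eq_pow n m f g x : Cn n f x -> Cn n g x -> jet_eq n f g x ->
  jet_eq n (fun y => f y ^ m) (fun y => g y ^ m) x.
Proof.
  intros Hf Hg J. induction m as [|m IH]; [intros k _; reflexivity|].
  apply (jet_eq_mult n f (fun y => f y ^ m) g (fun y => g y ^ m)); auto; now apply Cn_pow.
Qed.

Lemma Derive_n_mult_eq_0 j : forall a b f g x, (j < a + b)%nat -> Cn j f x -> Cn j g x ->
  (forall k, (k <= j)%nat -> (k < a)%nat -> Derive_n f k x = 0) ->
  (forall k, (k <= j)%nat -> (k < b)%nat -> Derive_n g k x = 0) ->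
  Derive_n (fun y => f y * g y) j x = 0.
Proof.
  induction j; intros a b f g x Hj Hf Hg Vf Vg.
  - simpl. destruct a.
    + generalize (Vg 0%nat (le_n _) ltac:(lia)); simpl; intros ->. ring.
    + generalize (Vf 0%nat (le_n _) ltac:(lia)); simpl; intros ->. ring.
  - rewrite Derive_n_S_mult by auto.
    assert (C1 := Cn_le j _ _ _ (Nat.le_succ_diag_r j) Hf).
    assert (C2 := Cn_le j _ _ _ (Nat.le_succ_diag_r j) Hg).
    apply Cn_S in Hf as [_ Hf']. apply Cn_S in Hg as [_ Hg'].
    rewrite (IHj (pred a) b (Derive f) g x), (IHj a (pred b) f (Derive g) x); auto; try lia; try ring;
      intros k Hk1 Hk2; rewrite ?Derive_n_Derive; first [apply Vf | apply Vg]; lia.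
Qed.

Lemma Derive_n_comp_eq_0 n : forall a u g x, Cn n u (g x) -> Cn n g x ->
  (forall k, (k <= n)%nat -> (k < a)%nat -> Derive_n u k (g x) = 0) ->
  forall i, (i <= n)%nat -> (i < a)%nat -> Derive_n (fun y => u (g y)) i x = 0.
Proof.
  induction n; intros a u g x Hu Hg Vu [|i] Hi Ha; try lia; try exact (Vu 0%nat (Nat.le_0_l _) Ha).
  rewrite Derive_n_S_comp by (apply (Cn_le _ (S n)); auto; lia).
  assert (C3 := Cn_le n _ _ _ (Nat.le_succ_diag_r n) Hg).
  apply Cn_S in Hu as [_ Hu']; apply Cn_S in Hg as [_ Hg'].
  apply (Derive_n_mult_eq_0 i (pred a) 0); try lia.
  - apply Cn_comp; apply (Cn_le i n); auto; lia.
  - apply (Cn_le i n); auto; lia.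
  - intros k Hk1 Hk2. apply (IHn (pred a) (Derive u) g x Hu' C3); try lia.
    intros l Hl1 Hl2. rewrite Derive_n_Derive. apply Vu; lia.
Qed.

(** * Polynomials and Taylor polynomials at 0 *)

Fixpoint peval (p : list R) (x : R) : R :=
  match p with nil => 0 | a :: q => a + x * peval q x end.

Fixpoint padd (p q : list R) : list R :=
  match p, q with
  | nil, _ => q
  | _, nil => p
  | a :: p', b :: q' => (a + b) :: padd p' q'
  end.

Fixpoint pder (p : list R) : list R :=
  match p with nil => nil | a :: q => padd q (0 :: pder q) end.

Fixpoint pmul (p q : list R) : list R :=
  match p with nil => nil | a :: p' => padd (map (Rmult a) q) (0 :: pmul p' q) end.

Fixpoint ppow (p : list R) (m : nat) : list R :=
  match m with O => [1] | S m' => pmul p (ppow p m') end.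

Lemma peval_padd p q x : peval (padd p q) x = peval p x + peval q x.
Proof.
  revert q; induction p as [|a p IH]; intros [|b q]; simpl; try ring.
  rewrite IH. ring.
Qed.

Lemma peval_map_mult a q x : peval (map (Rmult a) q) x = a * peval q x.
Proof. induction q; simpl; try rewrite IHq; ring. Qed.

Lemma peval_pmul p q x : peval (pmul p q) x = peval p x * peval q x.
Proof.
  induction p as [|a p IH]; simpl; [ring|].
  rewrite peval_padd, peval_map_mult. simpl. rewrite IH. ring.
Qed.

Lemma peval_ppow p m x : peval (ppow p m) x = peval p x ^ m.
Proof. induction m as [|m IH]; simpl; [ring|]. now rewrite peval_pmul, IH. Qed.

Lemma is_derive_peval p x : is_derive (peval p) x (peval (pder p) x).
Proof.
  apply is_derive_Reals.
  induction p as [|a p IH]; simpl; [apply (derivable_pt_lim_const 0)|].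
  rewrite peval_padd. simpl.
  replace (peval p x + (0 + x * peval (pder p) x))
    with (0 + (1 * peval p x + x * peval (pder p) x)) by ring.
  apply (derivable_pt_lim_plus (fun _ => a) (fun y => y * peval p y)).
  - apply derivable_pt_lim_const.
  - apply (derivable_pt_lim_mult (fun y => y) (peval p)); [apply derivable_pt_lim_id | exact IH].
Qed.

Lemma Derive_peval p : Derive (peval p) = peval (pder p).
Proof. apply functional_extensionality; intro x. apply is_derive_unique, is_derive_peval. Qed.

Lemma Cinf_peval p x : Cinf (peval p) x.
Proof.
  intro n. revert p; induction n; intro p; [apply Cn_0|].
  apply Cn_S; split; [apply filter_forall; intro y; eexists; apply is_derive_peval|].
  rewrite Derive_peval. apply IHn.
Qed.

Lemma nth_padd p q k : nth k (padd p q) 0 = nth k p 0 + nth k q 0.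
Proof.
  revert q k; induction p as [|a p IH]; intros [|b q] [|k]; simpl; try ring; auto.
  all: destruct k; simpl; ring.
Qed.

Lemma nth_pder p k : nth k (pder p) 0 = INR (S k) * nth (S k) p 0.
Proof.
  revert k; induction p as [|a p IH]; intro k; simpl; [destruct k; simpl; ring|].
  rewrite nth_padd. destruct k; [simpl; ring|].
  cbn [nth]. rewrite IH, !S_INR. ring.
Qed.

Lemma Derive_n_peval_0 k p : Derive_n (peval p) k 0 = INR (fact k) * nth k p 0.
Proof.
  revert p; induction k; intro p; [simpl; destruct p; simpl; ring|].
  rewrite <- Derive_n_Derive, Derive_peval, IHk, nth_pder.
  change (fact (S k)) with (S k * fact k)%nat. rewrite mult_INR. ring.
Qed.

Definition taylor_coeff (f : R -> R) (k : nat) : R := Derive_n f k 0 / INR (fact k).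

Definition taylor (n : nat) (f : R -> R) : list R := map (taylor_coeff f) (seq 0 (S n)).

Lemma taylor_coeff_peval p k : taylor_coeff (peval p) k = nth k p 0.
Proof. unfold taylor_coeff. rewrite Derive_n_peval_0. field. apply not_0_INR, fact_neq_0. Qed.

Lemma jet_eq_taylor n f : jet_eq n f (peval (taylor n f)) 0.
Proof.
  intros k Hk. rewrite Derive_n_peval_0. unfold taylor.
  rewrite (nth_indep _ 0 (taylor_coeff f 0)) by (rewrite length_map, length_seq; lia).
  rewrite map_nth, seq_nth by lia. unfold taylor_coeff. simpl. field.
  apply not_0_INR, fact_neq_0.
Qed.

(** The [n]-jet of [f ^ m] at [0] depends only on the [n]-jet of [f]. *)
Lemma Derive_n_pow_0 n m f k : Cn n f 0 -> (k <= n)%nat ->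
  Derive_n (fun s => f s ^ m) k 0 = INR (fact k) * nth k (ppow (taylor n f) m) 0.
Proof.
  intros Hf Hk. rewrite <- Derive_n_peval_0.
  rewrite (Derive_n_ext (peval _) (fun s => peval (taylor n f) s ^ m)) by apply peval_ppow.
  apply (jet_eq_pow n); [exact Hf | apply Cinf_peval | apply jet_eq_taylor | exact Hk].
Qed.

Lemma taylor7_0 f : f 0 = 0 -> taylor 7 f =
  [0; taylor_coeff f 1; taylor_coeff f 2; taylor_coeff f 3;
   taylor_coeff f 4; taylor_coeff f 5; taylor_coeff f 6; taylor_coeff f 7].
Proof. intro H. unfold taylor, taylor_coeff at 1. simpl. rewrite H. f_equal. field. Qed.

Lemma Derive_n_pow4_0 f : Cn 7 f 0 -> f 0 = 0 ->
  let c := taylor_coeff f in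
  Derive_n (fun s => f s ^ 4) 1 0 = 0 /\ Derive_n (fun s => f s ^ 4) 2 0 = 0 /\
  Derive_n (fun s => f s ^ 4) 3 0 = 0 /\
  Derive_n (fun s => f s ^ 4) 4 0 = 24 * c 1%nat ^ 4 /\
  Derive_n (fun s => f s ^ 4) 5 0 = 120 * (4 * c 1%nat ^ 3 * c 2%nat) /\
  Derive_n (fun s => f s ^ 4) 6 0 = 720 * (4 * c 1%nat ^ 3 * c 3%nat + 6 * c 1%nat ^ 2 * c 2%nat ^ 2) /\
  Derive_n (fun s => f s ^ 4) 7 0 = 5040 * (4 * c 1%nat ^ 3 * c 4%nat
                                     + 12 * c 1%nat ^ 2 * c 2%nat * c 3%nat + 4 * c 1%nat * c 2%nat ^ 3).
Proof.
  intros Hf H0; cbv zeta. rewrite !(Derive_n_pow_0 7) by (auto; lia).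
  rewrite taylor7_0, !INR_IZR_INZ by exact H0.
  repeat split; cbn -[Rplus Rmult taylor_coeff IZR]; ring.
Qed.

Lemma Derive_n_pow5_0 f : Cn 7 f 0 -> f 0 = 0 ->
  let c := taylor_coeff f in
  Derive_n (fun s => f s ^ 5) 1 0 = 0 /\ Derive_n (fun s => f s ^ 5) 2 0 = 0 /\
  Derive_n (fun s => f s ^ 5) 3 0 = 0 /\ Derive_n (fun s => f s ^ 5) 4 0 = 0 /\
  Derive_n (fun s => f s ^ 5) 5 0 = 120 * c 1%nat ^ 5 /\
  Derive_n (fun s => f s ^ 5) 6 0 = 720 * (5 * c 1%nat ^ 4 * c 2%nat) /\
  Derive_n (fun s => f s ^ 5) 7 0 = 5040 * (5 * c 1%nat ^ 4 * c 3%nat + 10 * c 1%nat ^ 3 * c 2%nat ^ 2).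
Proof.
  intros Hf H0; cbv zeta. rewrite !(Derive_n_pow_0 7) by (auto; lia).
  rewrite taylor7_0, !INR_IZR_INZ by exact H0.
  repeat split; cbn -[Rplus Rmult taylor_coeff IZR]; ring.
Qed.

(** * Plane curves composed with smooth maps *)

Lemma smooth2_near_partial F Q e b : smooth2_near F Q e -> smooth2_near (partial b F) Q e.
Proof.
  intros H ds p Hp.
  replace (iter_partial ds (partial b F)) with (iter_partial (ds ++ [b]) F)
    by (unfold iter_partial; now rewrite fold_right_app).
  now apply H.
Qed.

Lemma in_square_locally Q e p : in_square Q e p -> locally p (in_square Q e).
Proof.
  destruct p as [x y]. intros [H1 H2]. simpl in *.
  apply (locally_2d_locally (fun u v => in_square Q e (u, v))).
  set (d := Rmin (e - Rabs (x - fst Q)) (e - Rabs (y - snd Q))).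
  assert (Hd : 0 < d) by (unfold d; apply Rmin_case; lra).
  exists (mkposreal d Hd). intros u v Hu Hv. simpl in *.
  assert (d <= e - Rabs (x - fst Q)) by apply Rmin_l.
  assert (d <= e - Rabs (y - snd Q)) by apply Rmin_r.
  split; simpl.
  - replace (u - fst Q) with ((u - x) + (x - fst Q)) by ring.
    eapply Rle_lt_trans; [apply Rabs_triang | lra].
  - replace (v - snd Q) with ((v - y) + (y - snd Q)) by ring.
    eapply Rle_lt_trans; [apply Rabs_triang | lra].
Qed.

Lemma locally_in_square_comp Q e c1 c2 t : continuity_pt c1 t -> continuity_pt c2 t ->
  in_square Q e (c1 t, c2 t) -> locally t (fun s => in_square Q e (c1 s, c2 s)).
Proof.
  intros H1 H2 [K1 K2]; simpl in *.
  generalize (filter_and _ _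
    (locally_pt_comp (fun z => Rabs (z - fst Q) < e) c1 t (locally_Rabs_lt _ _ _ K1) H1)
    (locally_pt_comp (fun z => Rabs (z - snd Q) < e) c2 t (locally_Rabs_lt _ _ _ K2) H2)).
  apply filter_imp. intros s [a b]. now split.
Qed.

Lemma is_derive_comp_2d F Q e c1 c2 t : smooth2_near F Q e -> in_square Q e (c1 t, c2 t) ->
  ex_derive c1 t -> ex_derive c2 t ->
  is_derive (fun s => F (c1 s, c2 s)) t
    (partial true F (c1 t, c2 t) * Derive c1 t + partial false F (c1 t, c2 t) * Derive c2 t).
Proof.
  intros HF Hin D1 D2.
  set (f := fun x y => F (x, y)).
  assert (Hdiff : differentiable_pt_lim f (c1 t) (c2 t)
     (partial true F (c1 t, c2 t)) (partial false F (c1 t, c2 t))).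
  { apply filterdiff_differentiable_pt_lim.
    apply (is_derive_filterdiff f (c1 t) (c2 t) (fun u v => partial true F (u, v))).
    - apply filter_imp with (2 := in_square_locally _ _ _ Hin).
      intros [u v] Huv. apply Derive_correct. exact (proj1 (HF nil (u, v) Huv) true).
    - apply Derive_correct. exact (proj1 (HF nil _ Hin) false).
    - destruct (HF [true] _ Hin) as [_ Hc].
      eapply filterlim_ext; [| exact Hc]. intros [u v]. reflexivity. }
  apply is_derive_Reals, (derivable_pt_lim_comp_2d f c1 c2 t); [exact Hdiff | |];
    now apply is_derive_Reals, Derive_correct.
Qed.

Lemma Derive_comp_2d_ext_loc F Q e c1 c2 t : smooth2_near F Q e -> in_square Q e (c1 t, c2 t) ->
  Cn 1 c1 t -> Cn 1 c2 t ->
  locally t (fun s => Derive (fun s => F (c1 s, c2 s)) s =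
    partial true F (c1 s, c2 s) * Derive c1 s + partial false F (c1 s, c2 s) * Derive c2 s).
Proof.
  intros HF Hin H1 H2.
  assert (Ls := locally_in_square_comp Q e c1 c2 t
    (Cn_continuity_pt 1 _ _ Nat.lt_0_1 H1) (Cn_continuity_pt 1 _ _ Nat.lt_0_1 H2) Hin).
  apply Cn_S in H1 as [D1 _]; apply Cn_S in H2 as [D2 _].
  generalize (filter_and _ _ Ls (filter_and _ _ D1 D2)). apply filter_imp.
  intros s [a [b c]]. apply is_derive_unique. now apply (is_derive_comp_2d F Q e).
Qed.

Lemma Cn_comp_2d n : forall F Q e c1 c2 t, smooth2_near F Q e ->
  Cn n c1 t -> Cn n c2 t -> in_square Q e (c1 t, c2 t) ->
  Cn n (fun s => F (c1 s, c2 s)) t.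
Proof.
  induction n; intros F Q e c1 c2 t HF H1 H2 Hin; [apply Cn_0|].
  assert (E := Derive_comp_2d_ext_loc F Q e c1 c2 t HF Hin
    (Cn_le 1 (S n) _ _ ltac:(lia) H1) (Cn_le 1 (S n) _ _ ltac:(lia) H2)).
  assert (Ls := locally_in_square_comp Q e c1 c2 t
    (Cn_continuity_pt _ _ _ (Nat.lt_0_succ n) H1) (Cn_continuity_pt _ _ _ (Nat.lt_0_succ n) H2) Hin).
  assert (K1 := Cn_le n _ _ _ (Nat.le_succ_diag_r n) H1).
  assert (K2 := Cn_le n _ _ _ (Nat.le_succ_diag_r n) H2).
  apply Cn_S in H1 as [D1 E1]; apply Cn_S in H2 as [D2 E2].
  apply Cn_S; split.
  - generalize (filter_and _ _ Ls (filter_and _ _ D1 D2)). apply filter_imp.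
    intros s [a [b c]]. eexists. now apply (is_derive_comp_2d F Q e).
  - apply Cn_ext_loc with (2 := Cn_plus _ _ _ _
      (Cn_mult _ _ _ _ (IHn _ Q e _ _ _ (smooth2_near_partial F Q e true HF) K1 K2 Hin) E1)
      (Cn_mult _ _ _ _ (IHn _ Q e _ _ _ (smooth2_near_partial F Q e false HF) K1 K2 Hin) E2)).
    apply filter_imp with (2 := E). intros s Hs. now rewrite Hs.
Qed.

Lemma Derive_n_comp_2d_eq_0 m F Q e c1 c2 k : smooth2_near F Q e -> Cn k c1 0 -> Cn k c2 0 ->
  in_square Q e (c1 0, c2 0) ->
  (forall j, (1 <= j)%nat -> (j < m)%nat -> Derive_n c1 j 0 = 0 /\ Derive_n c2 j 0 = 0) ->
  (1 <= k)%nat -> (k < m)%nat ->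
  Derive_n (fun s => F (c1 s, c2 s)) k 0 = 0.
Proof.
  intros HF H1 H2 Hin Hv Hk Hkm. destruct k as [|k]; [lia|].
  rewrite (Derive_n_S_ext_loc k _ _ _ (Derive_comp_2d_ext_loc F Q e c1 c2 0 HF Hin
    (Cn_le 1 _ _ _ Hk H1) (Cn_le 1 _ _ _ Hk H2))).
  assert (K1 := Cn_le k _ _ _ (Nat.le_succ_diag_r k) H1).
  assert (K2 := Cn_le k _ _ _ (Nat.le_succ_diag_r k) H2).
  apply Cn_S in H1 as [_ E1]; apply Cn_S in H2 as [_ E2].
  assert (C : forall b, Cn k (fun s => partial b F (c1 s, c2 s)) 0)
    by (intro b; apply (Cn_comp_2d k _ Q e); auto; now apply smooth2_near_partial).
  rewrite Derive_n_plus_of_Cn by (apply Cn_mult; auto).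
  rewrite (Derive_n_mult_eq_0 k 0 m), (Derive_n_mult_eq_0 k 0 m); auto; try lia; try ring;
    intros i Hi1 Hi2; rewrite Derive_n_Derive; apply Hv; lia.
Qed.

(** Below order [2 m], a curve vanishing to order [m] only sees the linear part of [F]. *)
Lemma Derive_n_comp_2d m F Q e c1 c2 k : smooth2_near F Q e -> Cn k c1 0 -> Cn k c2 0 ->
  in_square Q e (c1 0, c2 0) ->
  (forall j, (1 <= j)%nat -> (j < m)%nat -> Derive_n c1 j 0 = 0 /\ Derive_n c2 j 0 = 0) ->
  (1 <= k)%nat -> (k < 2 * m)%nat ->
  Derive_n (fun s => F (c1 s, c2 s)) k 0 =
  partial true F (c1 0, c2 0) * Derive_n c1 k 0 + partial false F (c1 0, c2 0) * Derive_n c2 k 0.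
Proof.
  intros HF H1 H2 Hin Hv Hk Hkm. destruct k as [|k]; [lia|].
  rewrite (Derive_n_S_ext_loc k _ _ _ (Derive_comp_2d_ext_loc F Q e c1 c2 0 HF Hin
    (Cn_le 1 _ _ _ Hk H1) (Cn_le 1 _ _ _ Hk H2))).
  assert (CP : forall b j, (j <= S k)%nat -> Cn j (fun s => partial b F (c1 s, c2 s)) 0).
  { intros b j Hj. apply (Cn_comp_2d j _ Q e); auto using smooth2_near_partial;
      apply (Cn_le j (S k)); auto. }
  assert (Lin : forall b c, Cn (S k) c 0 -> (forall j, (1 <= j)%nat -> (j < m)%nat -> Derive_n c j 0 = 0) ->
    Derive_n (fun s => partial b F (c1 s, c2 s) * Derive c s) k 0 =
    partial b F (c1 0, c2 0) * Derive_n c (S k) 0).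
  { intros b c Hc Vc.
    set (a := partial b F (c1 0, c2 0)).
    apply Cn_S in Hc as [_ Ec].
    assert (CF : Cn k (fun s => partial b F (c1 s, c2 s) - a) 0)
      by (apply Cn_minus; [apply CP; lia | apply Cn_const]).
    rewrite (Derive_n_ext _ (fun s => (partial b F (c1 s, c2 s) - a) * Derive c s + a * Derive c s))
      by (intro; ring).
    rewrite Derive_n_plus_of_Cn, Derive_n_scal_l, Derive_n_Derive by auto using Cn_mult, Cn_scal.
    rewrite (Derive_n_mult_eq_0 k m (pred m)); auto; try lia; [ring| |].
    - intros [|i] Hi1 Hi2; [simpl; unfold a; ring|].
      rewrite Derive_n_minus_of_Cn, Derive_n_const by (auto using Cn_const; apply CP; lia).
      rewrite (Derive_n_comp_2d_eq_0 m _ Q e c1 c2 (S i)); try ring; try lia;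
        auto using smooth2_near_partial; apply (Cn_le (S i) (S k)); auto; lia.
    - intros i Hi1 Hi2. rewrite Derive_n_Derive. apply Vc; lia. }
  assert (E1 := proj2 (proj1 (Cn_S _ _ _) H1)). assert (E2 := proj2 (proj1 (Cn_S _ _ _) H2)).
  rewrite Derive_n_plus_of_Cn by (apply Cn_mult; [apply CP; lia | assumption]).
  rewrite Lin, Lin; auto; intros j Hj1 Hj2; apply Hv; auto.
Qed.

Definition jacobian (F1 F2 : R * R -> R) (p : R * R) : R :=
  partial true F1 p * partial false F2 p - partial false F1 p * partial true F2 p.

Lemma linear_system_2x2_eq_0 a11 a12 a21 a22 x y : a11 * a22 - a12 * a21 <> 0 ->
  a11 * x + a12 * y = 0 -> a21 * x + a22 * y = 0 -> x = 0 /\ y = 0.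
Proof.
  intros D E1 E2.
  assert (X : (a11 * a22 - a12 * a21) * x = a22 * (a11 * x + a12 * y) - a12 * (a21 * x + a22 * y)) by ring.
  assert (Y : (a11 * a22 - a12 * a21) * y = a11 * (a21 * x + a22 * y) - a21 * (a11 * x + a12 * y)) by ring.
  rewrite E1, E2 in X, Y.
  split; apply (Rmult_eq_reg_l (a11 * a22 - a12 * a21)); auto; lra.
Qed.

Lemma Derive_n_eq_0_of_comp_2d n F1 F2 Q e c1 c2 :
  smooth2_near F1 Q e -> smooth2_near F2 Q e -> Cn n c1 0 -> Cn n c2 0 ->
  in_square Q e (c1 0, c2 0) -> jacobian F1 F2 (c1 0, c2 0) <> 0 ->
  (forall k, (1 <= k <= n)%nat ->
     Derive_n (fun s => F1 (c1 s, c2 s)) k 0 = 0 /\ Derive_n (fun s => F2 (c1 s, c2 s)) k 0 = 0) ->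
  forall k, (1 <= k <= n)%nat -> Derive_n c1 k 0 = 0 /\ Derive_n c2 k 0 = 0.
Proof.
  intros HF1 HF2 H1 H2 Hin Hj HF k. induction k as [k IH] using Wf_nat.lt_wf_ind. intros Hk.
  assert (Hv : forall j, (1 <= j)%nat -> (j < k)%nat -> Derive_n c1 j 0 = 0 /\ Derive_n c2 j 0 = 0)
    by (intros j Hj1 Hj2; apply IH; lia).
  assert (K1 := Cn_le k n _ _ (proj2 Hk) H1). assert (K2 := Cn_le k n _ _ (proj2 Hk) H2).
  destruct (HF k Hk) as [E1 E2].
  rewrite (Derive_n_comp_2d k F1 Q e) in E1 by (auto; lia).
  rewrite (Derive_n_comp_2d k F2 Q e) in E2 by (auto; lia).
  exact (linear_system_2x2_eq_0 _ _ _ _ _ _ Hj E1 E2).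
Qed.

(** * Diffeomorphism germs *)

Lemma diffeo1_germ_regular phi : diffeo1_germ phi 0 -> Cinf phi 0 /\ Derive phi 0 <> 0.
Proof.
  intros [e [chi [He [Hp [Hc [H1 H2]]]]]].
  assert (Cp : Cinf phi 0) by (apply (Cinf_of_smooth1_near phi 0 e); auto; rewrite Rminus_0_r, Rabs_R0; lra).
  assert (Cc : Cinf chi (phi 0)) by (apply (Cinf_of_smooth1_near chi (phi 0) e); auto; rewrite Rminus_eq_0, Rabs_R0; lra).
  split; [exact Cp|].
  assert (E : Derive (fun s => chi (phi s)) 0 = 1).
  { rewrite (Derive_ext_loc _ (fun s => s)); [apply (Derive_id 0)|].
    apply filter_imp with (2 := locally_Rabs_lt 0 e 0 ltac:(rewrite Rminus_0_r, Rabs_R0; lra)).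
    intros y Hy. apply H1. exact Hy. }
  rewrite Derive_comp in E by (apply (Cn_ex_derive 1); auto).
  intro Z. rewrite Z in E. lra.
Qed.

Definition coord (b : bool) (p : R * R) : R := if b then fst p else snd p.

Definition line (b : bool) (p : R * R) (t : R) : R * R := if b then (t, snd p) else (fst p, t).

Lemma in_square_line q e b t : 0 < e -> Rabs (t - coord b q) < e -> in_square q e (line b q t).
Proof. intros He Ht. destruct b; split; simpl; auto; rewrite Rminus_eq_0, Rabs_R0; lra. Qed.

(** Differentiating [coord i (chi (psi p)) = coord i p] along the coordinate line [b]
    gives the [(i, b)] entry of [Dchi * Dpsi = I]. *)
Lemma partial_left_inverse_2d psi chi q e i b : 0 < e ->
  map2_smooth_near psi q e -> smooth2_near (fun p => coord i (chi p)) (psi q) e ->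
  (forall p, in_square q e p -> chi (psi p) = p) ->
  partial true (fun p => coord i (chi p)) (psi q) * partial b (fun p => fst (psi p)) q +
  partial false (fun p => coord i (chi p)) (psi q) * partial b (fun p => snd (psi p)) q =
  if Bool.eqb i b then 1 else 0.
Proof.
  intros He [S1 S2] SG Hinv.
  set (c1 := fun t => fst (psi (line b q t))). set (c2 := fun t => snd (psi (line b q t))).
  set (t0 := coord b q).
  assert (Hq : in_square q e q) by (split; rewrite Rminus_eq_0, Rabs_R0; lra).
  assert (Lq : line b q t0 = q) by (unfold t0; destruct b, q; reflexivity).
  assert (Hin : in_square (psi q) e (c1 t0, c2 t0)).
  { unfold c1, c2. rewrite Lq, <- surjective_pairing. split; rewrite Rminus_eq_0, Rabs_R0; lra. }
  assert (D1 : ex_derive c1 t0) by (destruct b; [exact (proj1 (S1 nil q Hq) true) | exact (proj1 (S1 nil q Hq) false)]).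
  assert (D2 : ex_derive c2 t0) by (destruct b; [exact (proj1 (S2 nil q Hq) true) | exact (proj1 (S2 nil q Hq) false)]).
  assert (K := is_derive_comp_2d _ _ _ c1 c2 t0 SG Hin D1 D2).
  assert (K' : is_derive (fun t => coord i (chi (c1 t, c2 t))) t0 (if Bool.eqb i b then 1 else 0)).
  { apply is_derive_ext_loc with (fun t => coord i (line b q t)).
    - apply filter_imp with (2 := locally_Rabs_lt t0 e t0 ltac:(rewrite Rminus_eq_0, Rabs_R0; lra)).
      intros t Ht. unfold c1, c2. rewrite <- surjective_pairing, Hinv; [reflexivity|].
      now apply in_square_line.
    - destruct i, b; cbn; auto_derive; auto; ring. }
  transitivity (partial true (fun p => coord i (chi p)) (c1 t0, c2 t0) * Derive c1 t0
    + partial false (fun p => coord i (chi p)) (c1 t0, c2 t0) * Derive c2 t0).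
  { unfold c1, c2. rewrite Lq, <- surjective_pairing. destruct b; reflexivity. }
  transitivity (Derive (fun t => coord i (chi (c1 t, c2 t))) t0).
  - symmetry. apply is_derive_unique. exact K.
  - apply is_derive_unique. exact K'.
Qed.

Lemma det_ne_0_of_left_inverse_2x2 b11 b12 b21 b22 a11 a12 a21 a22 :
  b11 * a11 + b12 * a21 = 1 -> b11 * a12 + b12 * a22 = 0 ->
  b21 * a11 + b22 * a21 = 0 -> b21 * a12 + b22 * a22 = 1 ->
  a11 * a22 - a12 * a21 <> 0.
Proof.
  intros E1 E2 E3 E4 Z.
  assert (W : (b11 * b22 - b12 * b21) * (a11 * a22 - a12 * a21) = 1).
  { transitivity ((b11 * a11 + b12 * a21) * (b21 * a12 + b22 * a22)
                  - (b11 * a12 + b12 * a22) * (b21 * a11 + b22 * a21)); [ring|].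
    rewrite E1, E2, E3, E4. ring. }
  rewrite Z, Rmult_0_r in W. lra.
Qed.

Lemma diffeo2_germ_jacobian psi q : diffeo2_germ psi q ->
  exists e, 0 < e /\ map2_smooth_near psi q e /\
    jacobian (fun p => fst (psi p)) (fun p => snd (psi p)) q <> 0.
Proof.
  intros [e [chi [He [Spsi [[T1 T2] [H1 _]]]]]].
  exists e; split; [exact He|]; split; [exact Spsi|].
  exact (det_ne_0_of_left_inverse_2x2 _ _ _ _ _ _ _ _
    (partial_left_inverse_2d psi chi q e true true He Spsi T1 H1)
    (partial_left_inverse_2d psi chi q e true false He Spsi T1 H1)
    (partial_left_inverse_2d psi chi q e false true He Spsi T2 H1)
    (partial_left_inverse_2d psi chi q e false false He Spsi T2 H1)).
Qed.

(** * Smooth local inverses *)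

Section LocalInverse.

Variable f : R -> R.
Hypothesis f_smooth : forall x, Cinf f x.
Hypothesis f_0 : f 0 = 0.
Variable d : R.
Hypothesis d_pos : 0 < d.
Hypothesis Derive_f_gt : forall x, Rabs x <= d -> 1 / 2 < Derive f x.

Lemma local_increment x y : - d <= x -> x < y -> y <= d -> (y - x) / 2 <= f y - f x.
Proof.
  intros Hx Hxy Hy.
  destruct (MVT_cor2 f (Derive f) x y Hxy) as [c [Hc1 Hc2]].
  - intros c _. apply is_derive_Reals, Derive_correct, ex_derive_of_Cinf, f_smooth.
  - assert (1 / 2 < Derive f c) by (apply Derive_f_gt, Rabs_le; lra). nra.
Qed.

Definition local_inv (y : R) : R := epsilon (inhabits 0) (fun x => Rabs x <= d /\ f x = y).

Lemma local_inv_spec y : Rabs y < d / 2 -> Rabs (local_inv y) <= d /\ f (local_inv y) = y.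
Proof.
  intros Hy. unfold local_inv. apply epsilon_spec. apply Rabs_def2 in Hy.
  assert (F1 := local_increment (- d) 0 ltac:(lra) ltac:(lra) ltac:(lra)).
  assert (F2 := local_increment 0 d ltac:(lra) ltac:(lra) ltac:(lra)).
  destruct (IVT (fun x => f x - y) (- d) d) as [z [Hz1 Hz2]]; try lra.
  - intro x. apply continuity_pt_minus; [|apply continuity_pt_const; now intros u v].
    apply (Cn_continuity_pt 1 f x Nat.lt_0_1), f_smooth.
  - exists z. split; [apply Rabs_le|]; lra.
Qed.

Lemma local_inv_bounds y : Rabs y < d / 2 -> - d <= local_inv y <= d.
Proof. intro Hy. apply Rabs_le_between, (local_inv_spec y Hy). Qed.

Lemma local_inv_left x : Rabs x <= d -> local_inv (f x) = x.
Proof.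
  intros Hx. assert (S : Rabs (local_inv (f x)) <= d /\ f (local_inv (f x)) = f x)
    by (unfold local_inv; apply epsilon_spec; now exists x).
  apply Rabs_le_between in Hx. destruct S as [S1 S2]. apply Rabs_le_between in S1.
  destruct (Rtotal_order (local_inv (f x)) x) as [L|[L|L]]; auto.
  - assert (K := local_increment (local_inv (f x)) x ltac:(lra) L ltac:(lra)). lra.
  - assert (K := local_increment x (local_inv (f x)) ltac:(lra) L ltac:(lra)). lra.
Qed.

Lemma local_inv_lipschitz y1 y2 : Rabs y1 < d / 2 -> Rabs y2 < d / 2 ->
  Rabs (local_inv y1 - local_inv y2) <= 2 * Rabs (y1 - y2).
Proof.
  intros Hy1 Hy2.
  assert (B1 := local_inv_bounds y1 Hy1). assert (B2 := local_inv_bounds y2 Hy2).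
  assert (E1 := proj2 (local_inv_spec y1 Hy1)). assert (E2 := proj2 (local_inv_spec y2 Hy2)).
  destruct (Rtotal_order (local_inv y1) (local_inv y2)) as [L|[L|L]].
  - assert (K := local_increment (local_inv y1) (local_inv y2) ltac:(lra) L ltac:(lra)).
    rewrite E1, E2 in K. rewrite (Rabs_left (local_inv y1 - _)), (Rabs_left (y1 - y2)); lra.
  - rewrite L, Rminus_eq_0, Rabs_R0. assert (0 <= Rabs (y1 - y2)) by apply Rabs_pos. lra.
  - assert (K := local_increment (local_inv y2) (local_inv y1) ltac:(lra) L ltac:(lra)).
    rewrite E1, E2 in K. rewrite (Rabs_right (local_inv y1 - _)), (Rabs_right (y1 - y2)); lra.
Qed.

Lemma local_inv_continuity_pt y : Rabs y < d / 2 -> continuity_pt local_inv y.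
Proof.
  intros Hy eps Heps. exists (Rmin (eps / 2) (d / 2 - Rabs y)). split; [apply Rmin_case; lra|].
  intros z [_ Hz]. simpl in *. unfold R_dist in *.
  assert (Hz1 : Rabs (z - y) < eps / 2) by (eapply Rlt_le_trans; [exact Hz | apply Rmin_l]).
  assert (Hz2 : Rabs (z - y) < d / 2 - Rabs y) by (eapply Rlt_le_trans; [exact Hz | apply Rmin_r]).
  assert (Rabs z < d / 2).
  { replace z with ((z - y) + y) by ring. eapply Rle_lt_trans; [apply Rabs_triang | lra]. }
  eapply Rle_lt_trans; [apply local_inv_lipschitz; auto | lra].
Qed.

Lemma local_inv_le y1 y2 : Rabs y1 < d / 2 -> Rabs y2 < d / 2 -> y1 <= y2 -> local_inv y1 <= local_inv y2.
Proof.
  intros Hy1 Hy2 L.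
  assert (B1 := local_inv_bounds y1 Hy1). assert (B2 := local_inv_bounds y2 Hy2).
  destruct (Rle_lt_dec (local_inv y1) (local_inv y2)) as [K|K]; auto.
  assert (K' := local_increment (local_inv y2) (local_inv y1) ltac:(lra) K ltac:(lra)).
  rewrite (proj2 (local_inv_spec y1 Hy1)), (proj2 (local_inv_spec y2 Hy2)) in K'. lra.
Qed.

Lemma is_derive_local_inv y : Rabs y < d / 2 -> is_derive local_inv y (/ Derive f (local_inv y)).
Proof.
  intros Hy. set (r := (d / 2 - Rabs y) / 2).
  assert (Hr : 0 < r) by (unfold r; lra).
  assert (Hl : Rabs (y - r) < d / 2).
  { unfold Rminus. eapply Rle_lt_trans; [apply Rabs_triang|].
    rewrite Rabs_Ropp, (Rabs_right r) by lra. unfold r. lra. }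
  assert (Hu : Rabs (y + r) < d / 2).
  { eapply Rle_lt_trans; [apply Rabs_triang|]. rewrite (Rabs_right r) by lra. unfold r. lra. }
  set (Prf := fun a (_ : local_inv (y - r) <= a <= local_inv (y + r)) =>
    ex_derive_Reals_0 f a (ex_derive_of_Cinf f a (f_smooth a))).
  assert (Pi : local_inv (y - r) <= local_inv y <= local_inv (y + r)) by (split; apply local_inv_le; auto; lra).
  assert (Cmp : forall x0, y - r <= x0 <= y + r -> comp f local_inv x0 = id x0).
  { intros x0 Hx0. apply local_inv_spec.
    apply Rabs_def2 in Hl as [? ?]. apply Rabs_def2 in Hu as [? ?]. unfold id. apply Rabs_def1; lra. }
  assert (Nz : derive_pt f (local_inv y) (Prf (local_inv y) Pi) <> 0).
  { rewrite Derive_Reals. assert (1 / 2 < Derive f (local_inv y)) by apply Derive_f_gt, local_inv_spec, Hy. lra. }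
  assert (K := Ranalysis5.derivable_pt_lim_recip_interv f local_inv (y - r) (y + r) y Prf
    (local_inv_continuity_pt y Hy) ltac:(lra) ltac:(lra) Pi Cmp Nz).
  rewrite Derive_Reals in K. apply is_derive_Reals. unfold Rdiv in K. rewrite Rmult_1_l in K. exact K.
Qed.

(** [local_inv' = 1 / (f' o local_inv)] bootstraps the regularity of [local_inv]. *)
Lemma Cinf_local_inv y : Rabs y < d / 2 -> Cinf local_inv y.
Proof.
  intros Hy n. revert y Hy. induction n; intros y Hy; [apply Cn_0|].
  assert (Lo := locally_Rabs_lt_0 (d / 2) y Hy).
  apply Cn_S; split.
  - apply filter_imp with (2 := Lo). intros z Hz. eexists. now apply is_derive_local_inv.
  - apply Cn_ext_loc with (fun z => / Derive f (local_inv z)).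
    + apply filter_imp with (2 := Lo). intros z Hz. symmetry. now apply is_derive_unique, is_derive_local_inv.
    + apply (Cn_comp n Rinv (fun z => Derive f (local_inv z))).
      * apply Cn_inv. assert (1 / 2 < Derive f (local_inv y)) by apply Derive_f_gt, local_inv_spec, Hy. lra.
      * apply Cn_comp; [|now apply IHn]. apply Cn_S, f_smooth.
Qed.

End LocalInverse.

Lemma local_inverse (f : R -> R) : (forall x, Cinf f x) -> f 0 = 0 -> Derive f 0 = 1 ->
  exists e chi, 0 < e /\ (forall x, Rabs x < e -> chi (f x) = x) /\
    (forall y, Rabs y < e -> f (chi y) = y) /\ (forall y, Rabs y < e -> Cinf chi y).
Proof.
  intros Hf H0 H1.
  assert (Hc : continuity_pt (Derive f) 0)
    by exact (Cn_continuity_pt 1 _ 0 Nat.lt_0_1 (proj2 (proj1 (Cn_S 1 f 0) (Hf 0 2%nat)))).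
  destruct (Hc (1 / 2) ltac:(lra)) as [alp [Halp Hal]].
  set (d := alp / 2).
  assert (Dpos : forall x, Rabs x <= d -> 1 / 2 < Derive f x).
  { intros x Hx. destruct (Req_dec x 0) as [->|Hx0]; [lra|].
    assert (K : Rabs (Derive f x - Derive f 0) < 1 / 2).
    { apply (Hal x). split; [split; [constructor | auto]|].
      simpl. unfold R_dist. rewrite Rminus_0_r. unfold d in Hx. lra. }
    rewrite H1 in K. apply Rabs_def2 in K. lra. }
  exists (d / 2), (local_inv f d). split; [unfold d; lra|]. split; [|split].
  - intros x Hx. apply local_inv_left; auto; unfold d in *; lra.
  - intros y Hy. apply local_inv_spec; auto; unfold d; lra.
  - intros y Hy. apply Cinf_local_inv; auto; unfold d; lra.
Qed.

(** * Affine maps of the plane *)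

Lemma partial_ext b f g p : (forall p, f p = g p) -> partial b f p = partial b g p.
Proof. intro H. destruct b; simpl; apply Derive_ext; intro; apply H. Qed.

Lemma iter_partial_ext ds f g : (forall p, f p = g p) ->
  forall p, iter_partial ds f p = iter_partial ds g p.
Proof.
  intro H. induction ds as [|b ds IH]; intro p; simpl; [apply H|].
  now apply partial_ext.
Qed.

Lemma Derive_affine (al be : R) x : Derive (fun t => al + be * t) x = be.
Proof. apply is_derive_unique. auto_derive; auto; ring. Qed.

Lemma iter_partial_affine al be ga ds : exists al' be' ga', forall p,
  iter_partial ds (fun p => al + be * fst p + ga * snd p) p = al' + be' * fst p + ga' * snd p.
Proof.
  induction ds as [|b ds [al' [be' [ga' IH]]]]; [now exists al, be, ga|].
  destruct b.
  - exists be', 0, 0. intro p.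
    change (partial true (iter_partial ds (fun p => al + be * fst p + ga * snd p)) p
            = be' + 0 * fst p + 0 * snd p).
    rewrite (partial_ext _ _ _ _ IH). simpl.
    rewrite (Derive_ext _ (fun t => (al' + ga' * snd p) + be' * t)) by (intro; ring).
    rewrite Derive_affine. ring.
  - exists ga', 0, 0. intro p.
    change (partial false (iter_partial ds (fun p => al + be * fst p + ga * snd p)) p
            = ga' + 0 * fst p + 0 * snd p).
    rewrite (partial_ext _ _ _ _ IH). simpl. rewrite Derive_affine. ring.
Qed.

Lemma smooth2_near_affine F al be ga Q e :
  (forall p, F p = al + be * fst p + ga * snd p) -> smooth2_near F Q e.
Proof.
  intros HF ds p _.
  destruct (iter_partial_affine al be ga ds) as [al' [be' [ga' H]]].
  assert (E : forall p, iter_partial ds F p = al' + be' * fst p + ga' * snd p).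
  { intro q. rewrite <- H. now apply iter_partial_ext. }
  split.
  - intros [|]; simpl.
    + apply (ex_derive_ext (fun t => (al' + ga' * snd p) + be' * t)); [intro t; rewrite E; simpl; ring|].
      auto_derive; auto.
    + apply (ex_derive_ext (fun t => (al' + be' * fst p) + ga' * t)); [intro t; rewrite E; simpl; ring|].
      auto_derive; auto.
  - apply (continuous_ext (fun q => al' + be' * fst q + ga' * snd q)); [intro; now rewrite E|].
    apply (continuous_plus (fun q : R * R => al' + be' * fst q) (fun q : R * R => ga' * snd q)).
    + apply (continuous_plus (fun q : R * R => al') (fun q : R * R => be' * fst q)); [apply continuous_const|].
      apply (continuous_mult (fun _ : R * R => be') fst); [apply continuous_const | apply continuous_fst].
    + apply (continuous_mult (fun _ : R * R => ga') snd); [apply continuous_const | apply continuous_snd].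
Qed.

Definition affine2 (m1 m2 : R) (q p : R * R) : R := m1 * (fst p - fst q) + m2 * (snd p - snd q).

Lemma diffeo2_germ_affine m11 m12 m21 m22 q : m11 * m22 - m12 * m21 <> 0 ->
  diffeo2_germ (fun p => (affine2 m11 m12 q p, affine2 m21 m22 q p)) q.
Proof.
  intro Hd. set (D := m11 * m22 - m12 * m21) in *. destruct q as [q1 q2]. unfold affine2.
  exists 1, (fun p => (q1 + (m22 * fst p - m12 * snd p) / D, q2 + (- m21 * fst p + m11 * snd p) / D)).
  split; [lra|]. split; [split|split; [split|split]].
  - apply (smooth2_near_affine _ (- m11 * q1 - m12 * q2) m11 m12). intro; simpl; ring.
  - apply (smooth2_near_affine _ (- m21 * q1 - m22 * q2) m21 m22). intro; simpl; ring.
  - apply (smooth2_near_affine _ q1 (m22 / D) (- m12 / D)). intro; simpl; field; auto.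
  - apply (smooth2_near_affine _ q2 (- m21 / D) (m11 / D)). intro; simpl; field; auto.
  - intros [x y] _. simpl. unfold D in *. f_equal; field; auto.
  - intros [x y] _. simpl. unfold D in *. f_equal; field; auto.
Qed.

Lemma Cn_affine2 n m1 m2 q g x : Cn n (fun s => fst (g s)) x -> Cn n (fun s => snd (g s)) x ->
  Cn n (fun s => affine2 m1 m2 q (g s)) x.
Proof. intros H1 H2. unfold affine2. apply Cn_plus; apply Cn_scal, Cn_minus; auto using Cn_const. Qed.

Lemma Derive_n_affine2 k m1 m2 q g x : (1 <= k)%nat ->
  Cn k (fun s => fst (g s)) x -> Cn k (fun s => snd (g s)) x ->
  Derive_n (fun s => affine2 m1 m2 q (g s)) k x =
  m1 * Derive_n (fun s => fst (g s)) k x + m2 * Derive_n (fun s => snd (g s)) k x.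
Proof.
  intros Hk H1 H2. unfold affine2.
  rewrite Derive_n_plus_of_Cn by (apply Cn_scal, Cn_minus; auto using Cn_const).
  rewrite !Derive_n_scal_l, !Derive_n_minus_of_Cn by auto using Cn_const.
  destruct k; [lia|]. rewrite !Derive_n_const. ring.
Qed.

(** * The algebra of 7-jets *)

Lemma det_mul_2x2 a11 a12 a21 a22 x y x' y' :
  (a11 * a22 - a12 * a21) * (x * y' - y * x') =
  (a11 * x + a12 * y) * (a21 * x' + a22 * y') - (a21 * x + a22 * y) * (a11 * x' + a12 * y').
Proof. ring. Qed.

(** Each determinant [det(v_i, v_j)] of the vectors [v_k = (x_k, y_k)] is [det a ^ -1] times a
    polynomial in the Taylor coefficients [c] of [phi]; the quadric is the relation between these
    polynomials. *)
Lemma normal_form_relation a11 a12 a21 a22 x4 y4 x5 y5 x6 y6 x7 y7 c1 c2 c3 c4 :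
  a11 * a22 - a12 * a21 <> 0 -> c1 <> 0 ->
  a11 * x4 + a12 * y4 = 24 * c1 ^ 4 -> a21 * x4 + a22 * y4 = 0 ->
  a11 * x5 + a12 * y5 = 120 * (4 * c1 ^ 3 * c2) -> a21 * x5 + a22 * y5 = 120 * c1 ^ 5 ->
  a11 * x6 + a12 * y6 = 720 * (4 * c1 ^ 3 * c3 + 6 * c1 ^ 2 * c2 ^ 2) ->
  a21 * x6 + a22 * y6 = 720 * (5 * c1 ^ 4 * c2) ->
  a11 * x7 + a12 * y7 = 5040 * (4 * c1 ^ 3 * c4 + 12 * c1 ^ 2 * c2 * c3 + 4 * c1 * c2 ^ 3) ->
  a21 * x7 + a22 * y7 = 5040 * (5 * c1 ^ 4 * c3 + 10 * c1 ^ 3 * c2 ^ 2) ->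
  x5 * y4 - y5 * x4 <> 0 /\
  -77 * (x6 * y4 - y6 * x4) ^ 2 + 105 * (x5 * y4 - y5 * x4) * (x6 * y5 - y6 * x5)
    + 60 * (x5 * y4 - y5 * x4) * (x7 * y4 - y7 * x4) = 0.
Proof.
  intros HD Hc E4 F4 E5 F5 E6 F6 E7 F7.
  set (D := a11 * a22 - a12 * a21) in *.
  assert (KA := det_mul_2x2 a11 a12 a21 a22 x5 y5 x4 y4).
  assert (KB := det_mul_2x2 a11 a12 a21 a22 x6 y6 x4 y4).
  assert (KC := det_mul_2x2 a11 a12 a21 a22 x7 y7 x4 y4).
  assert (KD := det_mul_2x2 a11 a12 a21 a22 x6 y6 x5 y5).
  fold D in KA, KB, KC, KD.
  rewrite E4, F4, E5, F5 in KA. rewrite E4, F4, E6, F6 in KB.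
  rewrite E4, F4, E7, F7 in KC. rewrite E5, F5, E6, F6 in KD.
  split.
  - intro Z. rewrite Z, Rmult_0_r in KA.
    assert (c1 ^ 9 <> 0) by now apply pow_nonzero. nra.
  - apply (Rmult_eq_reg_l (D ^ 2)); [|now apply pow_nonzero].
    transitivity (-77 * (D * (x6 * y4 - y6 * x4)) ^ 2
      + 105 * (D * (x5 * y4 - y5 * x4)) * (D * (x6 * y5 - y6 * x5))
      + 60 * (D * (x5 * y4 - y5 * x4)) * (D * (x7 * y4 - y7 * x4))); [ring|].
    rewrite KA, KB, KC, KD. ring.
Qed.

(** Conversely the quadric lets us solve for [a] and for [phi = s + q s^2 + r s^3 + u s^4]. *)
Lemma normal_form_solution x4 y4 x5 y5 x6 y6 x7 y7 :
  x5 * y4 - y5 * x4 <> 0 ->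
  -77 * (x6 * y4 - y6 * x4) ^ 2 + 105 * (x5 * y4 - y5 * x4) * (x6 * y5 - y6 * x5)
    + 60 * (x5 * y4 - y5 * x4) * (x7 * y4 - y7 * x4) = 0 ->
  exists m11 m12 m21 m22 q r u, m11 * m22 - m12 * m21 <> 0 /\
    m11 * x4 + m12 * y4 = 24 /\ m21 * x4 + m22 * y4 = 0 /\
    m11 * x5 + m12 * y5 = 480 * q /\ m21 * x5 + m22 * y5 = 120 /\
    m11 * x6 + m12 * y6 = 720 * (4 * r + 6 * q ^ 2) /\ m21 * x6 + m22 * y6 = 3600 * q /\
    m11 * x7 + m12 * y7 = 5040 * (4 * u + 12 * q * r + 4 * q ^ 3) /\
    m21 * x7 + m22 * y7 = 5040 * (5 * r + 10 * q ^ 2).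
Proof.
  intros HA Hc.
  set (Dr := x4 * y5 - y4 * x5).
  assert (HD : Dr <> 0) by (unfold Dr; intro Z; apply HA; lra).
  set (be := (x4 * y6 - y4 * x6) / (6 * Dr)).
  set (al := (x6 * y5 - y6 * x5) / (30 * Dr)).
  set (al' := (x7 * y5 - y7 * x5) / (210 * Dr)).
  set (be' := (x4 * y7 - y4 * x7) / (42 * Dr)).
  set (q := be / 5).
  set (r := (al + 4 * q * be - 6 * q ^ 2) / 4).
  set (u := (al' + 4 * q * be' - 12 * q * r - 4 * q ^ 3) / 4).
  exists ((24 * y5 - 480 * q * y4) / Dr), ((480 * q * x4 - 24 * x5) / Dr),
         (- 120 * y4 / Dr), (120 * x4 / Dr), q, r, u.
  assert (E : Dr ^ 2 * (2520 * be' - 3150 * al - 2772 * be ^ 2) =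
     -77 * (x6 * y4 - y6 * x4) ^ 2 + 105 * (x5 * y4 - y5 * x4) * (x6 * y5 - y6 * x5)
    + 60 * (x5 * y4 - y5 * x4) * (x7 * y4 - y7 * x4)) by (unfold be', al, be, Dr in *; field; auto).
  rewrite Hc in E.
  assert (E' : 2520 * be' - 3150 * al - 2772 * be ^ 2 = 0).
  { apply (Rmult_eq_reg_l (Dr ^ 2)); [rewrite Rmult_0_r; exact E | now apply pow_nonzero]. }
  repeat split.
  - replace ((24 * y5 - 480 * q * y4) / Dr * (120 * x4 / Dr) - (480 * q * x4 - 24 * x5) / Dr * (- 120 * y4 / Dr))
      with (2880 / Dr) by (unfold Dr in *; field; auto).
    unfold Rdiv. apply Rmult_integral_contrapositive. split; [lra | now apply Rinv_neq_0_compat].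
  - unfold Dr in *; field; auto.
  - unfold Dr in *; field; auto.
  - unfold q, be, Dr in *; field; auto.
  - unfold Dr in *; field; auto.
  - unfold r, q, al, be, Dr in *; field; auto.
  - unfold q, be, Dr in *; field; auto.
  - unfold u, r, q, al', be', al, be, Dr in *; field; auto.
  - transitivity (5040 * be'); [unfold be', Dr in *; field; auto|].
    replace (5 * r + 10 * q ^ 2) with (5 / 4 * al + 11 / 10 * be ^ 2) by (unfold r, q; field).
    lra.
Qed.

Lemma Derive_n_pow_plus_flat_comp n j phi u F k : Cinf phi 0 -> phi 0 = 0 ->
  Cn n u 0 -> (forall i, (i <= n)%nat -> Derive_n u i 0 = 0) ->
  locally 0 (fun s => F s = phi s ^ j + u (phi s)) -> (k <= n)%nat ->
  Derive_n F k 0 = Derive_n (fun s => phi s ^ j) k 0.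
Proof.
  intros Cphi phi0 Cu Vu HF Hk.
  rewrite (Derive_n_ext_loc _ _ k 0 HF).
  assert (Cu' : Cn n u (phi 0)) by now rewrite phi0.
  rewrite Derive_n_plus_of_Cn by (apply (Cn_le k n); auto using Cn_pow, Cn_comp).
  rewrite (Derive_n_comp_eq_0 n (S n) u phi 0 Cu' (Cphi n)); [ring | | exact Hk | lia].
  intros i Hi _. rewrite phi0. now apply Vu.
Qed.

Lemma normal_form_jet_conditions g1 g2 F1 F2 Q e phi :
  Cinf g1 0 -> Cinf g2 0 -> smooth2_near F1 Q e -> smooth2_near F2 Q e ->
  in_square Q e (g1 0, g2 0) -> jacobian F1 F2 (g1 0, g2 0) <> 0 ->
  Cinf phi 0 -> phi 0 = 0 -> Derive phi 0 <> 0 ->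
  (forall k, (k <= 7)%nat ->
     Derive_n (fun s => F1 (g1 s, g2 s)) k 0 = Derive_n (fun s => phi s ^ 4) k 0 /\
     Derive_n (fun s => F2 (g1 s, g2 s)) k 0 = Derive_n (fun s => phi s ^ 5) k 0) ->
  (forall k, (1 <= k <= 3)%nat -> Derive_n g1 k 0 = 0 /\ Derive_n g2 k 0 = 0) /\
  let x k := Derive_n g1 k 0 in let y k := Derive_n g2 k 0 in
  x 5%nat * y 4%nat - y 5%nat * x 4%nat <> 0 /\
  -77 * (x 6%nat * y 4%nat - y 6%nat * x 4%nat) ^ 2
    + 105 * (x 5%nat * y 4%nat - y 5%nat * x 4%nat) * (x 6%nat * y 5%nat - y 6%nat * x 5%nat)
    + 60 * (x 5%nat * y 4%nat - y 5%nat * x 4%nat) * (x 7%nat * y 4%nat - y 7%nat * x 4%nat) = 0.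
Proof.
  intros Cg1 Cg2 S1 S2 Hin Jac Cphi phi0 Dphi0 J.
  destruct (Derive_n_pow4_0 phi (Cphi 7%nat) phi0) as [A1 [A2 [A3 [A4 [A5 [A6 A7]]]]]].
  destruct (Derive_n_pow5_0 phi (Cphi 7%nat) phi0) as [B1 [B2 [B3 [B4 [B5 [B6 B7]]]]]].
  assert (Low : forall k, (1 <= k <= 3)%nat -> Derive_n g1 k 0 = 0 /\ Derive_n g2 k 0 = 0).
  { apply (Derive_n_eq_0_of_comp_2d 3 F1 F2 Q e);
      [exact S1 | exact S2 | apply Cg1 | apply Cg2 | exact Hin | exact Jac |].
    intros k Hk. rewrite (proj1 (J k ltac:(lia))), (proj2 (J k ltac:(lia))).
    destruct k as [|[|[|[|]]]]; try lia; auto. }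
  assert (High : forall k, (4 <= k <= 7)%nat ->
    partial true F1 (g1 0, g2 0) * Derive_n g1 k 0 + partial false F1 (g1 0, g2 0) * Derive_n g2 k 0
      = Derive_n (fun s => phi s ^ 4) k 0 /\
    partial true F2 (g1 0, g2 0) * Derive_n g1 k 0 + partial false F2 (g1 0, g2 0) * Derive_n g2 k 0
      = Derive_n (fun s => phi s ^ 5) k 0).
  { intros k Hk. rewrite <- (proj1 (J k ltac:(lia))), <- (proj2 (J k ltac:(lia))).
    split; symmetry; apply (Derive_n_comp_2d 4 _ Q e); auto; try apply Cg1; try apply Cg2; try lia;
      intros j Hj1 Hj2; apply Low; lia. }
  assert (Hc1 : taylor_coeff phi 1 <> 0) by (unfold taylor_coeff; simpl; rewrite Rdiv_1_r; exact Dphi0).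
  destruct (High 4%nat ltac:(lia)) as [E4 F4]. destruct (High 5%nat ltac:(lia)) as [E5 F5].
  destruct (High 6%nat ltac:(lia)) as [E6 F6]. destruct (High 7%nat ltac:(lia)) as [E7 F7].
  rewrite A4 in E4; rewrite A5 in E5; rewrite A6 in E6; rewrite A7 in E7.
  rewrite B4 in F4; rewrite B5 in F5; rewrite B6 in F6; rewrite B7 in F7.
  split; [exact Low|].
  exact (normal_form_relation _ _ _ _ _ _ _ _ _ _ _ _ _ _ _ _ Jac Hc1 E4 F4 E5 F5 E6 F6 E7 F7).
Qed.

Lemma normal_form_necessary (a b : R) (gamma : R -> R * R) :
  a < 0 < b ->
  smooth1_on_interval (fun t => fst (gamma t)) a b ->
  smooth1_on_interval (fun t => snd (gamma t)) a b ->
  (exists (h : R -> R * R) (e : R),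
     0 < e /\ curve_smooth_near h 0 e /\
     (forall k : nat, (k <= 7)%nat -> dn h k 0 = (0, 0)) /\
     A_equivalent_at0 gamma (fun s => (s ^ 4 + fst (h s), s ^ 5 + snd (h s)))) ->
  dn gamma 1 0 = (0, 0) /\ dn gamma 2 0 = (0, 0) /\ dn gamma 3 0 = (0, 0) /\
  coefA gamma <> 0 /\
  -77 * (coefB gamma) ^ 2 + 105 * coefA gamma * coefD gamma + 60 * coefA gamma * coefC gamma = 0.
Proof.
  intros Hab Sg1 Sg2 [h [eh [Heh [[Sh1 Sh2] [Hh0 [phi [psi [e' [phi0 [_ [Dphi [Dpsi [He' Heq]]]]]]]]]]]]].
  set (g1 := fun t => fst (gamma t)) in *. set (g2 := fun t => snd (gamma t)) in *.
  assert (G0 : (g1 0, g2 0) = gamma 0) by (symmetry; apply surjective_pairing).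
  destruct (diffeo1_germ_regular phi Dphi) as [Cphi Dphi0].
  destruct (diffeo2_germ_jacobian psi (gamma 0) Dpsi) as [e2 [He2 [[S1 S2] Jac]]].
  assert (Loc : locally 0 (fun s => psi (g1 s, g2 s) = (phi s ^ 4 + fst (h (phi s)), phi s ^ 5 + snd (h (phi s)))))
    by (apply filter_imp with (2 := locally_Rabs_lt_0 e' 0 ltac:(rewrite Rabs_R0; lra));
        intros s Hs; unfold g1, g2; rewrite <- surjective_pairing; now apply Heq).
  assert (Ch : forall i, Cn 7 (fun s => coord i (h s)) 0)
    by (intros []; apply (Cinf_of_smooth1_near _ 0 eh); auto; rewrite Rminus_0_r, Rabs_R0; lra).
  assert (Vh : forall i k, (k <= 7)%nat -> Derive_n (fun s => coord i (h s)) k 0 = 0)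
    by (intros [] k Hk; [exact (f_equal fst (Hh0 k Hk)) | exact (f_equal snd (Hh0 k Hk))]).
  destruct (normal_form_jet_conditions g1 g2 (fun p => fst (psi p)) (fun p => snd (psi p)) (gamma 0) e2 phi)
    as [Low [HA HQ]]; [ | | exact S1 | exact S2 | | | exact Cphi | exact phi0 | exact Dphi0 | | ].
  - apply (Cinf_of_smooth1_on_interval g1 a b); auto; lra.
  - apply (Cinf_of_smooth1_on_interval g2 a b); auto; lra.
  - rewrite G0. split; rewrite Rminus_eq_0, Rabs_R0; lra.
  - now rewrite G0.
  - intros k Hk. split; [apply (Derive_n_pow_plus_flat_comp 7 4 phi (fun s => coord true (h s)))
                         | apply (Derive_n_pow_plus_flat_comp 7 5 phi (fun s => coord false (h s)))];
      auto; apply filter_imp with (2 := Loc); intros s Hs; now rewrite Hs.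
  - unfold coefA, coefB, coefC, coefD, det2, dn. cbn [fst snd]. fold g1 g2.
    destruct (Low 1%nat ltac:(lia)) as [-> ->]. destruct (Low 2%nat ltac:(lia)) as [-> ->].
    destruct (Low 3%nat ltac:(lia)) as [-> ->].
    repeat split; auto.
Qed.

Lemma Derive_n_affine2_minus_pow_0 n m1 m2 (g : R -> R * R) phi j :
  Cn n (fun s => fst (g s)) 0 -> Cn n (fun s => snd (g s)) 0 -> Cn n phi 0 ->
  phi 0 = 0 -> (0 < j)%nat ->
  (forall k, (1 <= k <= n)%nat -> m1 * Derive_n (fun s => fst (g s)) k 0
     + m2 * Derive_n (fun s => snd (g s)) k 0 = Derive_n (fun s => phi s ^ j) k 0) ->
  forall k, (k <= n)%nat -> Derive_n (fun s => affine2 m1 m2 (g 0) (g s) - phi s ^ j) k 0 = 0.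
Proof.
  intros H1 H2 Hphi phi0 Hj Hg [|k] Hk.
  - simpl. unfold affine2. rewrite phi0, pow_i by lia. ring.
  - rewrite Derive_n_minus_of_Cn by (apply (Cn_le _ n); auto using Cn_affine2, Cn_pow).
    rewrite Derive_n_affine2 by (try lia; apply (Cn_le _ n); auto).
    rewrite Hg by lia. ring.
Qed.

Lemma Derive_n_affine2_comp_inverse_eq_0 n m1 m2 (gamma : R -> R * R) phi chi j :
  Cn n (fun s => fst (gamma s)) 0 -> Cn n (fun s => snd (gamma s)) 0 -> Cn n phi 0 -> phi 0 = 0 ->
  Cn n chi 0 -> chi 0 = 0 -> locally 0 (fun t => phi (chi t) = t) -> (0 < j)%nat ->
  (forall k, (1 <= k <= n)%nat -> m1 * Derive_n (fun s => fst (gamma s)) k 0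
     + m2 * Derive_n (fun s => snd (gamma s)) k 0 = Derive_n (fun s => phi s ^ j) k 0) ->
  forall k, (k <= n)%nat ->
    Derive_n (fun t => affine2 m1 m2 (gamma 0) (gamma (chi t)) - t ^ j) k 0 = 0.
Proof.
  intros C1 C2 Cphi phi0 Cchi chi0 Inv Hj Hg k Hk.
  rewrite (Derive_n_ext_loc _ (fun t => affine2 m1 m2 (gamma 0) (gamma (chi t)) - phi (chi t) ^ j))
    by (apply filter_imp with (2 := Inv); intros t Ht; now rewrite Ht).
  apply (Derive_n_comp_eq_0 n (S n) (fun s => affine2 m1 m2 (gamma 0) (gamma s) - phi s ^ j) chi 0);
    [rewrite chi0 | exact Cchi | rewrite chi0 | exact Hk | lia].
  - apply Cn_minus; [now apply Cn_affine2 | now apply Cn_pow].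
  - intros i Hi _. now apply (Derive_n_affine2_minus_pow_0 n).
Qed.

Lemma radius_into_interval chi e a b : continuity_pt chi 0 -> 0 < e -> a < chi 0 < b ->
  exists e', 0 < e' /\ forall t, Rabs (t - 0) < e' -> Rabs t < e /\ a < chi t < b.
Proof.
  intros Hc He Hab. apply locally_ex_Rabs_lt, filter_and; [apply locally_Rabs_lt_0; rewrite Rabs_R0; lra|].
  apply (locally_pt_comp (fun y => a < y < b) chi 0); [|exact Hc].
  apply (locally_interval _ _ a b); simpl; try lra. now intros.
Qed.

Lemma diffeo1_germ_of_local_inverse phi chi e : (forall x, Cinf phi x) -> phi 0 = 0 -> 0 < e ->
  (forall x, Rabs x < e -> chi (phi x) = x) -> (forall y, Rabs y < e -> phi (chi y) = y) ->
  (forall y, Rabs y < e -> Cinf chi y) -> diffeo1_germ phi 0.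
Proof.
  intros Cphi phi0 He Inv1 Inv2 Cchi. exists e, chi.
  split; [exact He | split; [| split; [| split]]].
  - intros n x _. apply ex_derive_Derive_n_of_Cinf, Cphi.
  - intros n y Hy. rewrite phi0, Rminus_0_r in Hy. now apply ex_derive_Derive_n_of_Cinf, Cchi.
  - intros x Hx. rewrite Rminus_0_r in Hx. auto.
  - intros y Hy. rewrite phi0, Rminus_0_r in Hy. auto.
Qed.

Lemma normal_form_sufficient (a b : R) (gamma : R -> R * R) :
  a < 0 < b ->
  smooth1_on_interval (fun t => fst (gamma t)) a b ->
  smooth1_on_interval (fun t => snd (gamma t)) a b ->
  dn gamma 1 0 = (0, 0) -> dn gamma 2 0 = (0, 0) -> dn gamma 3 0 = (0, 0) ->
  coefA gamma <> 0 ->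
  -77 * (coefB gamma) ^ 2 + 105 * coefA gamma * coefD gamma + 60 * coefA gamma * coefC gamma = 0 ->
  exists (h : R -> R * R) (e : R),
    0 < e /\ curve_smooth_near h 0 e /\
    (forall k : nat, (k <= 7)%nat -> dn h k 0 = (0, 0)) /\
    A_equivalent_at0 gamma (fun s => (s ^ 4 + fst (h s), s ^ 5 + snd (h s))).
Proof.
  intros Hab Sg1 Sg2 Z1 Z2 Z3 HA HQ.
  set (g1 := fun t => fst (gamma t)) in *. set (g2 := fun t => snd (gamma t)) in *.
  unfold coefA, coefB, coefC, coefD, det2, dn in HA, HQ, Z1, Z2, Z3. cbn [fst snd] in HA, HQ.
  fold g1 g2 in HA, HQ, Z1, Z2, Z3.
  apply pair_equal_spec in Z1 as [X1 Y1]. apply pair_equal_spec in Z2 as [X2 Y2].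
  apply pair_equal_spec in Z3 as [X3 Y3].
  destruct (normal_form_solution _ _ _ _ _ _ _ _ HA HQ)
    as [m11 [m12 [m21 [m22 [q [r [u [Hdet [E4 [F4 [E5 [F5 [E6 [F6 [E7 F7]]]]]]]]]]]]]]].
  set (phi := peval [0; 1; q; r; u]).
  assert (phi0 : phi 0 = 0) by (unfold phi; simpl; ring).
  assert (dphi0 : Derive phi 0 = 1) by (unfold phi; rewrite Derive_peval; simpl; ring).
  destruct (local_inverse phi (Cinf_peval _) phi0 dphi0) as [e1 [chi [He1 [Inv1 [Inv2 Cchi]]]]].
  assert (chi0 : chi 0 = 0) by (rewrite <- phi0 at 1; apply Inv1; rewrite Rabs_R0; lra).
  assert (Cchi0 : Cinf chi 0) by (apply Cchi; rewrite Rabs_R0; lra).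
  destruct (radius_into_interval chi e1 a b (Cn_continuity_pt 1 _ _ Nat.lt_0_1 (Cchi0 1%nat)) He1)
    as [eh [Heh Hin]]; [now rewrite chi0|].
  assert (Cg : forall x, a < x < b -> Cinf g1 x /\ Cinf g2 x)
    by (intros; split; eapply Cinf_of_smooth1_on_interval; eauto).
  assert (Tc : forall k, taylor_coeff phi k = nth k [0; 1; q; r; u] 0) by apply taylor_coeff_peval.
  destruct (Derive_n_pow4_0 phi (Cinf_peval _ 0 7%nat) phi0) as [A1 [A2 [A3 [A4 [A5 [A6 A7]]]]]].
  destruct (Derive_n_pow5_0 phi (Cinf_peval _ 0 7%nat) phi0) as [B1 [B2 [B3 [B4 [B5 [B6 B7]]]]]].
  exists (fun t => (affine2 m11 m12 (gamma 0) (gamma (chi t)) - t ^ 4,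
                    affine2 m21 m22 (gamma 0) (gamma (chi t)) - t ^ 5)), eh.
  split; [exact Heh | split; [| split]].
  - split; intros n t Ht; destruct (Hin t Ht) as [Ht1 Ht2]; cbn [fst snd];
      apply ex_derive_Derive_n_of_Cinf; intro m;
      (apply Cn_minus; [apply (Cn_comp m (fun s => affine2 _ _ (gamma 0) (gamma s))) | apply Cn_pow, Cn_id]);
      solve [apply Cchi, Ht1 | apply Cn_affine2; apply Cg, Ht2].
  - intros k Hk. unfold dn. cbn [fst snd].
    f_equal; (apply (Derive_n_affine2_comp_inverse_eq_0 7 _ _ gamma phi chi);
      [apply Cg, Hab | apply Cg, Hab | apply Cinf_peval | exact phi0 | apply Cchi0 | exact chi0
      | apply filter_imp with (2 := locally_Rabs_lt_0 e1 0 ltac:(rewrite Rabs_R0; lra)); exact Inv2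
      | lia | | exact Hk]);
      intros k' Hk'; fold g1 g2; destruct k' as [|[|[|[|[|[|[|[|]]]]]]]]; try lia;
      rewrite ?X1, ?Y1, ?X2, ?Y2, ?X3, ?Y3, ?A1, ?A2, ?A3, ?A4, ?A5, ?A6, ?A7,
        ?B1, ?B2, ?B3, ?B4, ?B5, ?B6, ?B7, ?E4, ?E5, ?E6, ?E7, ?F4, ?F5, ?F6, ?F7, ?Tc; cbn [nth]; ring.
  - exists phi, (fun p => (affine2 m11 m12 (gamma 0) p, affine2 m21 m22 (gamma 0) p)), e1.
    split; [exact phi0 | split; [| split; [| split; [| split]]]].
    + cbn [fst snd]. rewrite chi0. unfold affine2. f_equal; ring.
    + exact (diffeo1_germ_of_local_inverse phi chi e1 (Cinf_peval _) phi0 He1 Inv1 Inv2 Cchi).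
    + now apply diffeo2_germ_affine.
    + exact He1.
    + intros s Hs. cbn [fst snd]. rewrite Inv1 by exact Hs. f_equal; ring.
Qed.

Theorem mainTheorem13 (a b : R) (gamma : R -> R * R) :
  a < 0 < b ->
  smooth1_on_interval (fun t => fst (gamma t)) a b ->
  smooth1_on_interval (fun t => snd (gamma t)) a b ->
  ((dn gamma 1 0 = (0, 0) /\ dn gamma 2 0 = (0, 0) /\ dn gamma 3 0 = (0, 0) /\
    coefA gamma <> 0 /\
    -77 * (coefB gamma) ^ 2 + 105 * coefA gamma * coefD gamma
      + 60 * coefA gamma * coefC gamma = 0)
   <->
   exists (h : R -> R * R) (e : R),
     0 < e /\ curve_smooth_near h 0 e /\
     (forall k : nat, (k <= 7)%nat -> dn h k 0 = (0, 0)) /\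
     A_equivalent_at0 gamma (fun s => (s ^ 4 + fst (h s), s ^ 5 + snd (h s)))).
Proof.
  intros Hab S1 S2. split.
  - intros (Z1 & Z2 & Z3 & HA & HQ). now apply (normal_form_sufficient a b).
  - now apply (normal_form_necessary a b).
Qed.
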